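(* Let $S$ be a numerical semigroup with minimal generating set $P$ and let $G=G(S)=(V,E)$. Then every vertex of $G$ of maximal degree belongs to $P$. Moreover, for every $r\ge1$, the set of vertices of $G$ of degree $r$ is an antichain under divisibility, i.e. there are no two distinct vertices $v_1,v_2$ of degree $r$ with $v_2-v_1\in S$.
   Context: A numerical semigroup is a subset $S\subseteq\mathbb N$ containing $0$, closed under addition, with finite complement; $S^*=S\setminus\{0\}$, $m=\min S^*$, $P=S^*\setminus(S^*+S^* )$. $X=\{s\in S^*: s-m\notin S\}$. The graph $G(S)$ has edge set all subsets $\{x,y\}\subseteq X$ ($x=y$ allowed) with $x+y\in X$, and vertex set $V$ the endvertices of these edges. $N_G(x)=\{y\in X: x+y\in X\}$ and $\deg(x)=|N_G(x)|$. *)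

From mathcomp Require Import all_boot.
Set Implicit Arguments. Unset Strict Implicit. Unset Printing Implicit Defensive.

Definition numerical_semigroup (S : pred nat) : Prop :=
  [/\ S 0, (forall a b, S a -> S b -> S (a + b)) & exists N, forall n, N <= n -> S n].

Definition Sstar (S : pred nat) (x : nat) : Prop := S x /\ 0 < x.

Definition multiplicity (S : pred nat) (m : nat) : Prop :=
  Sstar S m /\ forall s, Sstar S s -> m <= s.

Definition minimal_gen (S : pred nat) (x : nat) : Prop :=
  Sstar S x /\ ~ (exists a b, [/\ Sstar S a, Sstar S b & a + b = x]).

(* X = { s in Sstar : s - m notin S } (s >= m for s in Sstar, so nat subtraction is exact) *)
Definition Xset (S : pred nat) (m x : nat) : Prop :=
  Sstar S x /\ ~ S (x - m).

Definition edge (S : pred nat) (m x y : nat) : Prop :=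
  [/\ Xset S m x, Xset S m y & Xset S m (x + y)].

Definition vertex (S : pred nat) (m v : nat) : Prop := exists y, edge S m v y.

Definition nbr (S : pred nat) (m x y : nat) : Prop :=
  Xset S m y /\ Xset S m (x + y).

Definition has_degree (S : pred nat) (m x r : nat) : Prop :=
  exists s : seq nat, [/\ uniq s, (forall y, y \in s <-> nbr S m x y) & size s = r].

From mathcomp Require Import all_boot zify.
Set Implicit Arguments. Unset Strict Implicit.

(* If x \in S and b \in S* with x + b \in X, then y |-> y + b maps N_G(x + b)
   injectively into N_G(x) and misses b \in N_G(x), so deg(x + b) < deg(x).
   Hence a vertex a + b with a, b \in S* has smaller degree than the vertex a,
   and two vertices whose difference lies in S cannot have the same degree. *)

Lemma bounded_pred_enum (P : pred nat) N : (forall y, P y -> y < N) ->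
  exists s : seq nat, uniq s /\ forall y, y \in s <-> P y.
Proof.
move=> bnd; exists [seq y <- iota 0 N | P y].
split=> [|y]; first by rewrite filter_uniq ?iota_uniq.
rewrite mem_filter mem_iota /=; split=> [/andP [] // | Py].
by rewrite Py bnd.
Qed.

Section DegreeGraph.

Variables (S : pred nat) (m : nat).
Hypotheses (HS : numerical_semigroup S) (Hm : multiplicity S m).

Definition Xsetb x := [&& S x, 0 < x & ~~ S (x - m)].

Lemma XsetbP x : reflect (Xset S m x) (Xsetb x).
Proof. by apply: (iffP and3P) => [[? ? /negP] | [[? ?] /negP]]. Qed.

Lemma Xset_lt_bound : exists N, forall y, Xset S m y -> y < N.
Proof.
have [_ _ [N HN]] := HS; exists (N + m) => y [_ notS].
by rewrite ltnNge; apply/negP => le_Ny; apply: notS; apply: HN; lia.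
Qed.

Lemma has_degree_exists x : exists r, has_degree S m x r.
Proof.
have [N bnd] := Xset_lt_bound.
have [s [uniq_s mem_s]] :
    exists s, uniq s /\ forall y, y \in s <-> Xsetb y && Xsetb (x + y).
  by apply: (bounded_pred_enum (N := N)) => y /andP [/XsetbP /bnd].
exists (size s), s; split=> // y; rewrite mem_s /=; split.
  by case/andP => /XsetbP ? /XsetbP.
by case=> /XsetbP -> /XsetbP.
Qed.

Lemma Xset_summand x z : S x -> Sstar S z -> Xset S m (x + z) -> Xset S m z.
Proof.
move=> Sx Sz [_ notS]; split=> // Szm; apply: notS.
have [_ Hadd _] := HS; have [_ m_min] := Hm.
have -> : x + z - m = x + (z - m) by have := m_min z Sz; lia.
exact: Hadd.
Qed.

Lemma nbr_shift x b y :
  S x -> S b -> nbr S m (x + b) y -> nbr S m x (y + b).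
Proof.
move=> Sx Sb [[[Sy y_gt0] _] Xxby]; have [_ Hadd _] := HS.
have assoc_xyb : x + (y + b) = x + b + y by lia.
split; last by rewrite assoc_xyb.
apply: (Xset_summand Sx); first by split; [exact: Hadd | lia].
by rewrite assoc_xyb.
Qed.

Lemma degree_shift_lt x b r r' : S x -> Sstar S b -> Xset S m (x + b) ->
  has_degree S m x r -> has_degree S m (x + b) r' -> r' < r.
Proof.
move=> Sx Sb Xxb [s [_ mem_s <-]] [s' [uniq_s' mem_s' <-]].
have sub : {subset b :: map (addn^~ b) s' <= s}.
  move=> z; rewrite inE => /predU1P [-> | /mapP [y /mem_s' nbr_y ->]].
    by apply/mem_s; split; first exact: Xset_summand Xxb.
  by apply/mem_s; apply: nbr_shift => //; case: Sb.
have uniq_shift : uniq (b :: map (addn^~ b) s').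
  rewrite /= (map_inj_uniq (@addIn b)) uniq_s' andbT.
  by apply/mapP => -[y /mem_s' [[[_ y_gt0] _] _]]; lia.
by have := uniq_leq_size uniq_shift sub; rewrite /= size_map.
Qed.

End DegreeGraph.

Theorem corollary4p8 (S : pred nat) (m : nat) :
  numerical_semigroup S -> multiplicity S m ->
  (forall v r, vertex S m v -> has_degree S m v r ->
     (forall w r', vertex S m w -> has_degree S m w r' -> r' <= r) ->
     minimal_gen S v)
  /\
  (forall r, 1 <= r -> forall v1 v2,
     vertex S m v1 -> vertex S m v2 ->
     has_degree S m v1 r -> has_degree S m v2 r ->
     v1 < v2 -> ~ S (v2 - v1)).
Proof.
move=> HS Hm; split.
  move=> v r [w [Xv _ _]] deg_v max_r; split; first by case: Xv.
  case=> a [b [Sa Sb def_v]]; subst v.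
  have [ra deg_a] := has_degree_exists m HS a.
  have Xa : Xset S m a by apply: (Xset_summand HS Hm (proj1 Sb)); rewrite // addnC.
  have Xb := Xset_summand HS Hm (proj1 Sa) Sb Xv.
  have := max_r a ra (ex_intro _ b (And3 Xa Xb Xv)) deg_a.
  by rewrite leqNgt (degree_shift_lt HS Hm (proj1 Sa) Sb Xv deg_a deg_v).
move=> r _ v1 v2 [_ [[[Sv1 _] _] _ _]] [_ [Xv2 _ _]] deg1 deg2 lt12 Sd.
have Sd_star : Sstar S (v2 - v1) by split; rewrite // subn_gt0.
have def_v2 : v2 = v1 + (v2 - v1) by lia.
rewrite def_v2 in Xv2 deg2.
by have := degree_shift_lt HS Hm Sv1 Sd_star Xv2 deg1 deg2; rewrite ltnn.
Qed.
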